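(* Let $\Omega_1,\Omega_2\subset\mathbb{R}^n$ be nearly convex sets and $\varepsilon\geq 0$. If $\mathrm{ri}\,\Omega_1\cap\mathrm{ri}\,\Omega_2\neq \emptyset$, then for each $\bar x\in \Omega_1\cap\Omega_2$, $$N_\varepsilon(\bar x; \Omega_1\cap\Omega_2)=\bigcup_{\substack{\varepsilon_1\geq 0,\ \varepsilon_2\geq 0,\\ \varepsilon_1+\varepsilon_2=\varepsilon}}\big[N_{\varepsilon_1} (\bar x; \Omega_1)+N_{\varepsilon_2} (\bar x; \Omega_2)\big].$$
   Context: A set $D$ is nearly convex if there is a convex $E$ with $E\subset D\subset\overline{E}$. $\mathrm{ri}\,D=\{a\in D\mid\exists\delta>0,\ B(a;\delta)\cap\mathrm{aff}\,D\subset D\}$. For nonempty $\Omega\subset\mathbb{R}^n$, $\bar x\in\Omega$ and $\varepsilon\ge0$, the $\varepsilon$-normal set is $N_\varepsilon(\bar x;\Omega)=\{\xi\in\mathbb{R}^n\mid\langle\xi,x-\bar x\rangle\le\varepsilon\ \forall x\in\Omega\}$. Sums of sets are Minkowski sums. *)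

(* R^n is modelled as row vectors 'rV[R]_n over R : realType,
   with the Euclidean inner product and Euclidean distance. *)
From HB Require Import structures.
From mathcomp Require Import all_boot all_order all_algebra.
From mathcomp Require Import boolp classical_sets reals.
Set Implicit Arguments. Unset Strict Implicit. Unset Printing Implicit Defensive.
Import Order.TTheory GRing.Theory Num.Theory.
Local Open Scope ring_scope.
Local Open Scope classical_set_scope.

Section Defs.
Variables (R : realType) (n : nat).
Notation V := 'rV[R]_n.

Definition dotp (u v : V) : R := \sum_(i < n) u ord0 i * v ord0 i.

Definition sqdist (x y : V) : R := dotp (x - y) (x - y).

Definition ball_e (a : V) (d : R) : set V := [set x | sqdist x a < d ^+ 2 /\ 0 < d].

Definition convex_set (E : set V) : Prop :=
  forall x y t, E x -> E y -> 0 <= t <= 1 -> E (t *: x + (1 - t) *: y).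

Definition closure_e (E : set V) : set V :=
  [set x | forall d, 0 < d -> exists2 y, E y & sqdist x y < d ^+ 2].

Definition nearly_convex (D : set V) : Prop :=
  exists E : set V, convex_set E /\ E `<=` D /\ D `<=` closure_e E.

Definition aff (D : set V) : set V :=
  [set x | exists (k : nat) (p : 'I_k -> V) (w : 'I_k -> R),
      (forall i, D (p i)) /\ \sum_(i < k) w i = 1 /\ x = \sum_(i < k) w i *: p i].

Definition ri (D : set V) : set V :=
  [set a | D a /\ exists d, 0 < d /\ ball_e a d `&` aff D `<=` D].

Definition eps_normal (eps : R) (xbar : V) (Om : set V) : set V :=
  [set xi | forall x, Om x -> dotp xi (x - xbar) <= eps].

Definition msum (A B : set V) : set V :=
  [set z | exists a b, A a /\ B b /\ z = a + b].

End Defs.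

(* Write E_i for convex sets with E_i <= Om_i <= cl E_i; the inclusion from right to left
   is immediate.  A convex cone that is dense in a linear subspace contains 0 (induction on
   the dimension, projecting along a direction of the subspace); applied to the cone spanned
   by E_i - y, this shows that a point of ri Om_i has a neighbourhood in aff Om_i contained
   in E_i.  Given xi in N_eps(xbar; Om_1 /\ Om_2), the pairs (x - y, eps - <xi, y - xbar>)
   with x in E_1, y in E_2 span a convex cone in R^n x R which meets {0} x R only in
   nonnegative numbers, and whose projection to R^n is a linear subspace because the common
   relative interior point allows to reflect x - y.  Finite-dimensional Hahn-Banach yields a
   linear a with <a, x - y> <= eps - <xi, y - xbar>, which extends to Om_1 x Om_2 by density.
   Then eps_1 := sup_{x in Om_1} <a, x - xbar> and eps_2 := eps - eps_1 split
   xi = a + (xi - a) as required. *)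

From HB Require Import structures.
From mathcomp Require Import all_boot all_order all_algebra.
From mathcomp Require Import boolp classical_sets reals.
From mathcomp Require Import ring lra.
Import Order.TTheory GRing.Theory Num.Theory.
Local Open Scope ring_scope.
Local Open Scope classical_set_scope.

Section InnerProduct.
Context {R : realType} {n : nat}.
Notation V := 'rV[R]_n.
Implicit Types u v w : V.

Lemma dotpC u v : dotp u v = dotp v u.
Proof. by apply: eq_bigr => i _; rewrite mulrC. Qed.

Lemma dotpDr u v w : dotp u (v + w) = dotp u v + dotp u w.
Proof. by rewrite /dotp -big_split; apply: eq_bigr => i _; rewrite mxE mulrDr. Qed.

Lemma dotpZr a u v : dotp u (a *: v) = a * dotp u v.
Proof. by rewrite /dotp mulr_sumr; apply: eq_bigr => i _; rewrite mxE mulrCA. Qed.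

Lemma dotpDl u v w : dotp (v + w) u = dotp v u + dotp w u.
Proof. by rewrite dotpC dotpDr !(dotpC u). Qed.

Lemma dotpZl a u v : dotp (a *: v) u = a * dotp v u.
Proof. by rewrite dotpC dotpZr dotpC. Qed.

Lemma dotpNr u v : dotp u (- v) = - dotp u v.
Proof. by rewrite -scaleN1r dotpZr mulN1r. Qed.

Lemma dotpNl u v : dotp (- v) u = - dotp v u.
Proof. by rewrite -scaleN1r dotpZl mulN1r. Qed.

Lemma dotpBr u v w : dotp u (v - w) = dotp u v - dotp u w.
Proof. by rewrite dotpDr dotpNr. Qed.

Lemma dotpBl u v w : dotp (v - w) u = dotp v u - dotp w u.
Proof. by rewrite dotpDl dotpNl. Qed.

Lemma dotp0r u : dotp u 0 = 0.
Proof. by rewrite -(scale0r 0) dotpZr mul0r. Qed.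

Lemma dotp_delta u (k : 'I_n) : dotp u (delta_mx 0 k) = u ord0 k.
Proof.
rewrite /dotp (bigD1 k) //= big1 ?addr0; first by rewrite mxE !eqxx mulr1.
by move=> j /negbTE jk; rewrite mxE jk andbF mulr0.
Qed.

Lemma dotpp_ge0 u : 0 <= dotp u u.
Proof. by apply: sumr_ge0 => i _; rewrite -expr2 sqr_ge0. Qed.

Lemma dotpp_eq0 u : (dotp u u == 0) = (u == 0).
Proof.
apply/idP/eqP => [|->]; last by rewrite dotp0r.
rewrite psumr_eq0 => [/allP u0|i _]; last by rewrite -expr2 sqr_ge0.
apply/rowP => i; rewrite mxE; apply/eqP.
by rewrite -sqrf_eq0 expr2; apply: u0; rewrite mem_index_enum.
Qed.

Lemma dotpp_gt0 u : (0 < dotp u u) = (u != 0).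
Proof. by rewrite lt_def dotpp_eq0 dotpp_ge0 andbT. Qed.

Lemma dotp_sqr_le u v : dotp u v ^+ 2 <= dotp u u * dotp v v.
Proof.
have [->|v0] := eqVneq v 0; first by rewrite !dotp0r expr0n /= mulr0.
have := dotpp_ge0 (dotp v v *: u - dotp u v *: v).
rewrite !(dotpBl, dotpBr, dotpZl, dotpZr) (dotpC v u) => h.
have : 0 <= dotp v v * (dotp u u * dotp v v - dotp u v ^+ 2).
  by move: h; congr (_ <= _); ring.
by rewrite pmulr_rge0 ?dotpp_gt0 // subr_ge0.
Qed.

Definition enorm u : R := Num.sqrt (dotp u u).

Lemma enorm_ge0 u : 0 <= enorm u.
Proof. exact: sqrtr_ge0. Qed.

Lemma enorm_sqr u : enorm u ^+ 2 = dotp u u.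
Proof. by rewrite sqr_sqrtr // dotpp_ge0. Qed.

Lemma enorm_gt0 u : (0 < enorm u) = (u != 0).
Proof. by rewrite sqrtr_gt0 dotpp_gt0. Qed.

Lemma dotp_norm_le u v : `|dotp u v| <= enorm u * enorm v.
Proof.
rewrite -ler_sqr ?nnegrE ?mulr_ge0 ?enorm_ge0 //.
by rewrite real_normK ?num_real // exprMn !enorm_sqr dotp_sqr_le.
Qed.

Lemma dotp_le u v : dotp u v <= enorm u * enorm v.
Proof. exact: le_trans (ler_norm _) (dotp_norm_le u v). Qed.

Lemma enormD u v : enorm (u + v) <= enorm u + enorm v.
Proof.
rewrite -ler_sqr ?nnegrE ?addr_ge0 ?enorm_ge0 //.
rewrite enorm_sqr !(dotpDl, dotpDr) (dotpC v u) sqrrD -!enorm_sqr.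
by have := dotp_le u v; lra.
Qed.

Lemma enormZ a u : enorm (a *: u) = `|a| * enorm u.
Proof. by rewrite /enorm dotpZl dotpZr mulrA -expr2 sqrtrM ?sqr_ge0 // sqrtr_sqr. Qed.

Lemma sqdist_lt x y d : 0 < d -> (sqdist x y < d ^+ 2) = (enorm (x - y) < d).
Proof. by move=> d0; rewrite /sqdist -enorm_sqr ltr_pXn2r ?nnegrE ?enorm_ge0 ?ltW. Qed.

Lemma closure_eP (E : set V) x :
  closure_e E x <-> forall d, 0 < d -> exists2 y, E y & enorm (x - y) < d.
Proof.
by split=> cl d d0; have [y Ey yx] := cl d d0; exists y; rewrite ?sqdist_lt in yx *.
Qed.

Lemma ball_eP a d x : ball_e a d x <-> enorm (x - a) < d /\ 0 < d.
Proof. by rewrite /ball_e /=; split=> -[xa d0]; rewrite ?sqdist_lt in xa *. Qed.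

End InnerProduct.

Lemma closure_e_dotp_le {R : realType} {n : nat} (E : set 'rV[R]_n) b c x :
  (forall e, E e -> dotp b e <= c) -> closure_e E x -> dotp b x <= c.
Proof.
move=> Ec /closure_eP clx; rewrite leNgt; apply/negP => cx.
pose g := (dotp b x - c) / (1 + enorm b).
have nb := enorm_ge0 b.
have gE : g * (1 + enorm b) = dotp b x - c by rewrite divfK // gt_eqF //; lra.
have g0 : 0 < g by rewrite divr_gt0 ?subr_gt0 //; lra.
have [e Ee xe] := clx g g0.
have := dotp_le b (x - e); rewrite dotpBr.
have := Ec e Ee; have := enorm_ge0 (x - e); nra.
Qed.

Lemma between_sets {R : realType} (A B : set R) :
  (A !=set0 <-> B !=set0) -> (forall x y, A x -> B y -> x <= y) ->
  exists c, ubound A c /\ lbound B c.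
Proof.
move=> AB AleB; have [[x0 Ax0]|A0] := pselect (A !=set0).
  have [y0 By0] := AB.1 (ex_intro _ x0 Ax0).
  have ubA y : B y -> ubound A y by move=> By x Ax; exact: AleB.
  exists (sup A); split=> [|y By]; last by apply: ge_sup (ubA _ By); exists x0.
  by apply: sup_upper_bound; split; [exists x0 | exists y0; exact: ubA].
exists 0; split=> [x Ax|y By]; first by case: A0; exists x.
by case: A0; apply: AB.2; exists y.
Qed.

(* Finite-dimensional Hahn-Banach, proved one coordinate at a time. *)
Section ConeSeparation.
Context {R : realType} {n : nat}.
Notation V := 'rV[R]_n.
Implicit Types (z : V) (r s t : R).

Definition vanish_from (k : nat) z := forall j : 'I_n, (k <= j)%N -> z ord0 j = 0.

Context {M : V -> R -> Prop}.
Hypothesis M_add : forall {z1 r1 z2 r2}, M z1 r1 -> M z2 r2 -> M (z1 + z2) (r1 + r2).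
Hypothesis M_scale : forall {t z r}, 0 < t -> M z r -> M (t *: z) (t * r).
Hypothesis M_0 : forall r, M 0 r -> 0 <= r.
Hypothesis M_opp : forall {z r}, M z r -> exists s r', 0 < s /\ M (- (s *: z)) r'.

Section Step.
Variables (k : 'I_n) (a : V).
Hypothesis sep_k : forall z r, M z r -> vanish_from k z -> dotp a z <= r.

Let vanish_fromS z : vanish_from k.+1 z -> z ord0 k = 0 -> vanish_from k z.
Proof. by move=> zk zk0 j; case: ltngtP => // [kj _|/val_inj <-//]; exact: zk. Qed.

Let vanish_from_lin s t z z' : vanish_from k.+1 z -> vanish_from k.+1 z' ->
  vanish_from k.+1 (s *: z + t *: z').
Proof. by move=> zk z'k j kj; rewrite !mxE zk // z'k // !mulr0 addr0. Qed.

Let sep_cross z r z' r' : M z r -> M z' r' -> vanish_from k.+1 z -> vanish_from k.+1 z' ->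
  0 < z ord0 k -> z' ord0 k < 0 -> (dotp a z' - r') / - z' ord0 k <= (r - dotp a z) / z ord0 k.
Proof.
move=> Mz Mz' zk z'k zk_gt0 z'k_lt0; have z'k_gt0 : 0 < - z' ord0 k by rewrite oppr_gt0.
have vk : vanish_from k (- z' ord0 k *: z + z ord0 k *: z').
  by apply: vanish_fromS; [exact: vanish_from_lin | rewrite !mxE; ring].
have := sep_k _ _ (M_add (M_scale z'k_gt0 Mz) (M_scale zk_gt0 Mz')) vk.
by rewrite dotpDr !dotpZr => h; rewrite ler_pdivrMr // mulrAC ler_pdivlMr //; nra.
Qed.

Let sep_flip z r : M z r -> vanish_from k.+1 z ->
  exists2 s, 0 < s & exists r', M (- (s *: z)) r' /\ vanish_from k.+1 (- (s *: z)).
Proof.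
move=> Mz zk; have [s [r' [s0 Msz]]] := M_opp Mz; exists s => //; exists r'; split=> //.
by move=> j kj; rewrite !mxE zk // mulr0 oppr0.
Qed.

Lemma cone_separation_step :
  exists a', forall z r, M z r -> vanish_from k.+1 z -> dotp a' z <= r.
Proof.
pose Lo := [set x | exists z r, [/\ M z r, vanish_from k.+1 z, z ord0 k < 0 &
                                      x = (dotp a z - r) / - z ord0 k]].
pose Up := [set x | exists z r, [/\ M z r, vanish_from k.+1 z, 0 < z ord0 k &
                                      x = (r - dotp a z) / z ord0 k]].
(* [a + c e_k] works iff [c] is an upper bound of [Lo] and a lower bound of [Up]. *)
have [c [Lo_c c_Up]] : exists c, ubound Lo c /\ lbound Up c.
  apply: between_sets => [|_ _ [z' [r' [Mz' z'k z'k_lt0 ->]]] [z [r [Mz zk zk_gt0 ->]]]].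
    split=> -[_ [z [r [Mz zk zk0 _]]]]; have [s s0 [r' [Msz szk]]] := sep_flip _ _ Mz zk.
      by eexists; exists (- (s *: z)), r'; split; rewrite // !mxE oppr_gt0 pmulr_rlt0.
    by eexists; exists (- (s *: z)), r'; split; rewrite // !mxE oppr_lt0 pmulr_rgt0.
  exact: sep_cross.
exists (a + c *: delta_mx 0 k) => z r Mz zk.
rewrite dotpDl dotpZl (dotpC (delta_mx 0 k)) dotp_delta.
case: (ltgtP (z ord0 k) 0) => [zk_lt0|zk_gt0|zk0].
- have := Lo_c _ (ex_intro _ z (ex_intro _ r (And4 Mz zk zk_lt0 erefl))).
  by rewrite ler_pdivrMr ?oppr_gt0 //; lra.
- have := c_Up _ (ex_intro _ z (ex_intro _ r (And4 Mz zk zk_gt0 erefl))).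
  by rewrite ler_pdivlMr //; lra.
- by rewrite zk0 mulr0 addr0; apply: sep_k; last exact: vanish_fromS.
Qed.

End Step.

Lemma cone_separation : exists a, forall z r, M z r -> dotp a z <= r.
Proof.
have sep_from k : exists a, forall z r, M z r -> vanish_from k z -> dotp a z <= r.
  elim: k => [|k [a sep]].
    exists 0 => z r Mz z0; have z_eq0 : z = 0 by apply/rowP => j; rewrite mxE z0.
    by move: Mz; rewrite z_eq0 dotp0r; exact: M_0.
  have [kn|nk] := ltnP k n; first exact: (@cone_separation_step (Ordinal kn) a sep).
  exists a => z r Mz _; apply: sep => // j kj.
  by have := ltn_ord j; rewrite ltnNge (leq_trans nk kj).
have [a sep] := sep_from n; exists a => z r Mz; apply: sep => // j.
by rewrite leqNgt ltn_ord.
Qed.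

End ConeSeparation.

Section DenseCone.
Context {R : realType} {n : nat}.
Notation V := 'rV[R]_n.
Implicit Types (u w x : V) (L K : set V).

Definition subspace L :=
  [/\ L 0, forall x y, L x -> L y -> L (x + y) & forall a x, L x -> L (a *: x)].

Definition cone K :=
  (forall x y, K x -> K y -> K (x + y)) /\ (forall t x, 0 < t -> K x -> K (t *: x)).

Definition dense_cone L K := [/\ subspace L, cone K, K `<=` L & L `<=` closure_e K].

Definition proj u x : V := x - (dotp u x / dotp u u) *: u.

Lemma proj_is_linear u : linear (proj u).
Proof.
by move=> a x y; rewrite /proj dotpDr dotpZr; apply/rowP => j; rewrite !mxE; ring.
Qed.

HB.instance Definition _ u := GRing.isLinear.Build R V V *:%R (proj u) (proj_is_linear u).

Lemma proj_self u : proj u u = 0.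
Proof.
have [->|u0] := eqVneq u 0; first by rewrite /proj scaler0 subr0.
by rewrite /proj divff ?scale1r ?subrr // dotpp_eq0.
Qed.

Lemma enorm_proj_le u x : enorm (proj u x) <= enorm x.
Proof.
have [->|u0] := eqVneq u 0; first by rewrite /proj scaler0 subr0.
have uu : 0 < dotp u u by rewrite dotpp_gt0.
rewrite -ler_sqr ?nnegrE ?enorm_ge0 // !enorm_sqr.
have -> : dotp (proj u x) (proj u x) = dotp x x - dotp u x ^+ 2 / dotp u u.
  by rewrite /proj !(dotpBl, dotpBr, dotpZl, dotpZr) (dotpC x u); field; rewrite gt_eqF.
by rewrite lerBlDr lerDl divr_ge0 ?sqr_ge0 ?ltW.
Qed.

Lemma dim_img_proj_lt (U : {vspace V}) u :
  u != 0 -> u \in U -> (\dim (linfun (proj u) @: U) < \dim U)%N.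
Proof.
move=> u0 Uu; rewrite -(limg_ker_dim (linfun (proj u)) U) -add1n leq_add2r.
apply: leq_trans (_ : \dim <[u]> <= _)%N; first by rewrite dim_vline u0.
by apply: dimvS; rewrite -memvE memv_cap Uu memv_ker lfunE /= proj_self.
Qed.

Lemma subspace_linear_image (f : {linear V -> V}) L : subspace L -> subspace (f @` L).
Proof.
case=> L0 LD LZ; split; first by exists 0; rewrite ?linear0.
- by move=> _ _ [x Lx <-] [y Ly <-]; exists (x + y); rewrite ?linearD //; exact: LD.
- by move=> a _ [x Lx <-]; exists (a *: x); rewrite ?linearZ //; exact: LZ.
Qed.

Lemma cone_linear_image (f : {linear V -> V}) K : cone K -> cone (f @` K).
Proof.
case=> KD KZ; split.
- by move=> _ _ [x Kx <-] [y Ky <-]; exists (x + y); rewrite ?linearD //; exact: KD.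
- by move=> t _ t0 [x Kx <-]; exists (t *: x); rewrite ?linearZ //; exact: KZ.
Qed.

Lemma cone_halfspace u K : cone K -> cone [set k | K k /\ dotp u k < 0].
Proof.
case=> KD KZ; split.
- by move=> x y [Kx ux] [Ky uy]; split; [exact: KD | rewrite dotpDr; lra].
- by move=> t x t0 [Kx ux]; split; [exact: KZ | rewrite dotpZr pmulr_rlt0].
Qed.

(* Approximating [w - t u] instead of [w], with [t] chosen so that [<u, w - t u> = -<u, u>],
   makes the approximating point of [K] lie in the open half-space [<u, .> < 0]. *)
Lemma dense_cone_proj L K u : dense_cone L K -> L u -> u != 0 ->
  dense_cone (proj u @` L) (proj u @` [set k | K k /\ dotp u k < 0]).
Proof.
move=> [Lsub Kcone KL LK] Lu u0; have [_ LD LZ] := Lsub.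
split; [exact: subspace_linear_image | exact/cone_linear_image/cone_halfspace |
        by apply: image_subset => k [/KL] |].
move=> _ [w Lw <-]; apply/closure_eP => rho rho0.
pose p := w - (dotp u w / dotp u u + 1) *: u.
have Lp : L p by rewrite /p -scaleN1r scalerA; exact: LD (LZ _ _ Lu).
have proj_p : proj u p = proj u w by rewrite linearB linearZ /= proj_self scaler0 subr0.
have up : dotp u p = - dotp u u.
  by rewrite /p dotpBr dotpZr; field; rewrite gt_eqF ?dotpp_gt0.
have nu : 0 < enorm u by rewrite enorm_gt0.
have eta0 : 0 < Order.min rho (enorm u) by rewrite lt_min rho0 nu.
have [k Kk] := (closure_eP _ _).1 (LK _ Lp) _ eta0.
rewrite lt_min => /andP[pk_rho pk_u]; exists (proj u k).
  exists k => //; split=> //; have := dotp_norm_le u (p - k).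
  by rewrite ler_norml dotpBr up -enorm_sqr => /andP[+ _]; nra.
by rewrite -proj_p -linearB; exact: le_lt_trans (enorm_proj_le _ _) pk_rho.
Qed.

Lemma dense_cone_trivial L K : dense_cone L K -> ~ (exists2 u, L u & u != 0) -> K 0.
Proof.
move=> [[L0 _ _] _ KL LK] Lnz; have [k Kk _] := (closure_eP _ _).1 (LK _ L0) _ ltr01.
by have [k0|k0] := eqVneq k 0; [rewrite -k0 | case: Lnz; exists k => //; exact: KL].
Qed.

Lemma proj_eq0_neg_multiple u k : proj u k = 0 -> dotp u k < 0 -> exists2 c, c < 0 & k = c *: u.
Proof.
move=> /eqP; rewrite subr_eq0 => /eqP ek uk; exists (dotp u k / dotp u u) => //.
apply: contraTT uk; rewrite -!leNgt => c_ge0.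
by rewrite ek dotpZr mulr_ge0 ?dotpp_ge0.
Qed.

Lemma dense_cone0_dim m (U : {vspace V}) L K :
  (\dim U <= m)%N -> dense_cone L K -> L `<=` [set` U] -> K 0.
Proof.
elim: m U L K => [|m IH] U L K dimU LK LU;
  have [[u Lu u0]|Lnz] := pselect (exists2 u, L u & u != 0); try exact: dense_cone_trivial LK Lnz.
  by move: dimU (LU u Lu); rewrite leqn0 dimv_eq0 => /eqP ->; rewrite /= memv0 (negbTE u0).
have [[_ _ LZ] [KD KZ] _ _] := LK.
have neg_ray v : L v -> v != 0 -> exists2 c, c < 0 & K (c *: v).
  move=> Lv v0; have [k [Kk vk] pk0] : (proj v @` [set k | K k /\ dotp v k < 0]) 0.
    apply: (IH (linfun (proj v) @: U)%VS (proj v @` L)).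
    - by rewrite -ltnS (leq_trans _ dimU) ?dim_img_proj_lt ?LU.
    - exact: dense_cone_proj.
    - by move=> _ [w Lw <-]; rewrite /= -lfunE memv_img ?LU.
  by have [c c_lt0 ek] := proj_eq0_neg_multiple _ _ pk0 vk; exists c => //; rewrite -ek.
have [c1 c1_lt0 Kc1] := neg_ray u Lu u0.
have Lnu : L (- u) by rewrite -scaleN1r; exact: LZ.
have [c2 c2_lt0 Kc2] : exists2 c, c < 0 & K (c *: - u) by apply: neg_ray; rewrite ?oppr_eq0.
have [c1_gt0 c2_gt0] : 0 < - c1 /\ 0 < - c2 by rewrite !oppr_gt0.
have -> : 0 = (- c2) *: (c1 *: u) + (- c1) *: (c2 *: - u).
  by apply/rowP => j; rewrite !mxE; ring.
exact: KD (KZ _ _ c2_gt0 Kc1) (KZ _ _ c1_gt0 Kc2).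
Qed.

Lemma dense_cone0 {L K} : dense_cone L K -> K 0.
Proof. by move=> LK; apply: (dense_cone0_dim _ fullv _ _ (leqnn _) LK) => w _; rewrite /= memvf. Qed.

End DenseCone.

Section RelativeInterior.
Context {R : realType} {n : nat}.
Notation V := 'rV[R]_n.
Implicit Types (D E : set V) (x y : V).

Definition rel_ball D x r := [set y | aff D y /\ enorm (y - x) < r].

Lemma rel_ballS {D x r r'} : r <= r' -> rel_ball D x r `<=` rel_ball D x r'.
Proof. by move=> rr' y [Ay yx]; split=> //; exact: lt_le_trans rr'. Qed.

Lemma aff_mem {D x} : D x -> aff D x.
Proof. by move=> Dx; exists 1%N, (fun=> x), (fun=> 1); rewrite !big_ord1 scale1r. Qed.

Lemma aff_comb2 {D x y} l : aff D x -> aff D y -> aff D (l *: x + (1 - l) *: y).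
Proof.
move=> [k1 [p1 [w1 [Dp1 [sw1 ->]]]]] [k2 [p2 [w2 [Dp2 [sw2 ->]]]]].
pose P i := match @split k1 k2 i with inl j => p1 j | inr j => p2 j end.
pose W i := match @split k1 k2 i with inl j => l * w1 j | inr j => (1 - l) * w2 j end.
exists (k1 + k2)%N, P, W; split; first by move=> i; rewrite /P; case: split.
rewrite !big_split_ord /P /W.
under eq_bigr do rewrite (unsplitK (inl _)).
under [X in _ + X = _]eq_bigr do rewrite (unsplitK (inr _)).
under [X in _ = X + _]eq_bigr do rewrite (unsplitK (inl _)).
under [X in _ = _ + X]eq_bigr do rewrite (unsplitK (inr _)).
rewrite -!mulr_sumr sw1 sw2 !mulr1 subrKC !scaler_sumr; split=> //.
by congr (_ + _); apply: eq_bigr => i _; rewrite scalerA.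
Qed.

Lemma aff_reflect D x0 x s : aff D x0 -> aff D x -> aff D (x0 + s *: (x0 - x)).
Proof.
move=> Ax0 Ax; have := aff_comb2 (1 + s) Ax0 Ax.
by congr (aff D _); apply/rowP => j; rewrite !mxE; ring.
Qed.

Lemma aff_shift_subspace {D y} : aff D y -> subspace [set w | aff D (y + w)].
Proof.
move=> Ay; have shiftZ a w : aff D (y + w) -> aff D (y + a *: w).
  by move=> Ayw; have := aff_comb2 a Ayw Ay; congr (aff D _); apply/rowP => j; rewrite !mxE; ring.
split=> [|w1 w2 Aw1 Aw2|a w]; rewrite /= ?addr0 //; last exact: shiftZ.
have Amid : aff D (y + (2^-1 *: (y + w1) + (1 - 2^-1) *: (y + w2) - y)).
  by rewrite subrKC; exact: aff_comb2.
by have := shiftZ 2 _ Amid; congr (aff D _); apply/rowP => j; rewrite !mxE; field.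
Qed.

Lemma convex_conic {E t1 t2 x1 x2} : convex_set E -> 0 < t1 -> 0 < t2 -> E x1 -> E x2 ->
  exists2 x, E x & t1 *: x1 + t2 *: x2 = (t1 + t2) *: x.
Proof.
move=> cE t1_gt0 t2_gt0 Ex1 Ex2; have t12 : t1 + t2 != 0 by rewrite gt_eqF // addr_gt0.
exists (t1 / (t1 + t2) *: x1 + (1 - t1 / (t1 + t2)) *: x2).
  apply: cE => //; apply/andP; split; first by rewrite divr_ge0 ?ltW ?addr_gt0.
  by rewrite ler_pdivrMr ?addr_gt0 // mul1r lerDl ltW.
by apply/rowP => j; rewrite !mxE; field.
Qed.

Definition cone_at E y := [set z | exists2 t, 0 < t & exists2 e, E e & z = t *: (e - y)].

Lemma cone_at_cone {E} y : convex_set E -> cone (cone_at E y).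
Proof.
move=> cE; split=> [_ _ [t1 t1_gt0 [e1 Ee1 ->]] [t2 t2_gt0 [e2 Ee2 ->]]|t _ t0 [s s0 [e Ee ->]]].
  have [e Ee e12] := convex_conic cE t1_gt0 t2_gt0 Ee1 Ee2.
  exists (t1 + t2); first exact: addr_gt0.
  by exists e => //; rewrite !scalerBr -e12 scalerDl opprD addrACA.
by exists (t * s); [exact: mulr_gt0 | exists e; rewrite ?scalerA].
Qed.

Lemma cone_at_dense {D E y r} : 0 < r -> D `<=` closure_e E -> rel_ball D y r `<=` D ->
  aff D y -> [set w | aff D (y + w)] `<=` closure_e (cone_at E y).
Proof.
move=> r0 DE ballD Ay w Ayw; apply/closure_eP => rho rho0.
have nw := enorm_ge0 w; pose s := r / (1 + enorm w).
have s0 : 0 < s by rewrite divr_gt0 //; lra.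
have sw : s * enorm w < r.
  by rewrite /s mulrAC ltr_pdivrMr; [nra | lra].
have [_ _ shiftZ] := aff_shift_subspace Ay.
have Dysw : D (y + s *: w).
  by apply: ballD; split; [exact: shiftZ | rewrite addrC addKr enormZ gtr0_norm].
have [e Ee ye] := (closure_eP _ _).1 (DE _ Dysw) _ (mulr_gt0 s0 rho0).
exists (s^-1 *: (e - y)); first by exists s^-1; rewrite ?invr_gt0 //; exists e.
have -> : w - s^-1 *: (e - y) = s^-1 *: (y + s *: w - e).
  by apply/rowP => j; rewrite !mxE; field; rewrite gt_eqF.
by rewrite enormZ gtr0_norm ?invr_gt0 // mulrC ltr_pdivrMr // mulrC.
Qed.

Lemma ri_core {D E x0} : convex_set E -> E `<=` D -> D `<=` closure_e E -> ri D x0 ->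
  exists2 r, 0 < r & rel_ball D x0 r `<=` E.
Proof.
move=> cE ED DE [_ [d [d0 ballD]]]; exists (d / 2) => [|y [Ay yx0]]; first exact: divr_gt0.
have ballyD : rel_ball D y (d / 2) `<=` D.
  move=> v [Av vy]; apply: ballD; split=> //; apply/ball_eP; split=> //.
  by have := enormD (v - y) (y - x0); rewrite addrA subrK; lra.
have Kcl := cone_at_dense (divr_gt0 d0 (ltr0n _ 2)) DE ballyD Ay.
have KL : cone_at E y `<=` [set w | aff D (y + w)].
  move=> _ [t _ [e Ee ->]]; have := aff_comb2 t (aff_mem (ED _ Ee)) Ay.
  by congr (aff D _); apply/rowP => j; rewrite !mxE; ring.
have [t t0 [e Ee /esym/eqP]] := dense_cone0 (And4 (aff_shift_subspace Ay) (cone_at_cone y cE) KL Kcl).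
by rewrite scaler_eq0 gt_eqF //= subr_eq0 => /eqP <-.
Qed.

End RelativeInterior.

Section NormalSeparation.
Context {R : realType} {n : nat}.
Notation V := 'rV[R]_n.
Context {Om1 Om2 E1 E2 : set V} {x0 xbar xi : V} {r eps : R}.
Hypotheses (cE1 : convex_set E1) (cE2 : convex_set E2).
Hypotheses (E1_Om1 : E1 `<=` Om1) (E2_Om2 : E2 `<=` Om2) (Om1x0 : Om1 x0) (Om2x0 : Om2 x0).
Hypotheses (r_gt0 : 0 < r) (core1 : rel_ball Om1 x0 r `<=` E1) (core2 : rel_ball Om2 x0 r `<=` E2).
Hypothesis xi_normal : eps_normal eps xbar (Om1 `&` Om2) xi.

Let M z c := exists t x y,
  [/\ 0 < t, E1 x, E2 y, z = t *: (x - y) & c = t * (eps - dotp xi (y - xbar))].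

Let M_add z1 c1 z2 c2 : M z1 c1 -> M z2 c2 -> M (z1 + z2) (c1 + c2).
Proof.
move=> [t1 [x1 [y1 [t1_gt0 Ex1 Ey1 -> ->]]]] [t2 [x2 [y2 [t2_gt0 Ex2 Ey2 -> ->]]]].
have [x Ex ex] := convex_conic cE1 t1_gt0 t2_gt0 Ex1 Ex2.
have [y Ey ey] := convex_conic cE2 t1_gt0 t2_gt0 Ey1 Ey2.
exists (t1 + t2), x, y; split=> //; first exact: addr_gt0.
  by rewrite !scalerBr -ex -ey opprD addrACA.
have xi_y : t1 * dotp xi y1 + t2 * dotp xi y2 = (t1 + t2) * dotp xi y.
  by rewrite -!dotpZr -dotpDr ey.
rewrite !dotpBr; transitivity
  ((t1 + t2) * eps - (t1 * dotp xi y1 + t2 * dotp xi y2) + (t1 + t2) * dotp xi xbar).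
  by ring.
by rewrite xi_y; ring.
Qed.

Let M_scale t z c : 0 < t -> M z c -> M (t *: z) (t * c).
Proof.
move=> t0 [s [x [y [s0 Ex Ey -> ->]]]].
by exists (t * s), x, y; rewrite scalerA mulrA; split=> //; exact: mulr_gt0.
Qed.

Let M_0 c : M 0 c -> 0 <= c.
Proof.
move=> [t [x [y [t0 Ex Ey /esym/eqP + ->]]]].
rewrite scaler_eq0 gt_eqF //= subr_eq0 => /eqP exy; subst y.
apply: mulr_ge0; first exact: ltW.
by rewrite subr_ge0; apply: xi_normal; split; [exact: E1_Om1 | exact: E2_Om2].
Qed.

Let M_opp z c : M z c -> exists s c', 0 < s /\ M (- (s *: z)) c'.
Proof.
move=> [t [x [y [t0 Ex Ey -> _]]]].
have [nx ny] := (enorm_ge0 (x0 - x), enorm_ge0 (x0 - y)).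
pose s := r / (1 + enorm (x0 - x) + enorm (x0 - y)).
have s0 : 0 < s by rewrite divr_gt0 //; lra.
have sE : s * (1 + enorm (x0 - x) + enorm (x0 - y)) = r by rewrite /s divfK // gt_eqF //; lra.
have [sx sy] : s * enorm (x0 - x) < r /\ s * enorm (x0 - y) < r.
  by rewrite -sE !ltr_pM2l //; split; lra.
have reflect_core (Om E : set V) v : rel_ball Om x0 r `<=` E -> Om x0 -> Om v ->
    s * enorm (x0 - v) < r -> E (x0 + s *: (x0 - v)).
  move=> core Omx0 Omv sv; apply: core; split; first exact: aff_reflect (aff_mem _) (aff_mem _).
  by rewrite addrAC subrr add0r enormZ gtr0_norm.
exists (s / t), (1 * (eps - dotp xi (x0 + s *: (x0 - y) - xbar))); split; first exact: divr_gt0.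
exists 1, (x0 + s *: (x0 - x)), (x0 + s *: (x0 - y)); split=> //.
- exact: reflect_core _ _ _ core1 Om1x0 (E1_Om1 _ Ex) sx.
- exact: reflect_core _ _ _ core2 Om2x0 (E2_Om2 _ Ey) sy.
- by apply/rowP => j; rewrite !mxE; field; rewrite gt_eqF.
Qed.

Lemma normal_separation :
  exists a, forall x y, E1 x -> E2 y -> dotp a x + dotp (xi - a) y <= eps + dotp xi xbar.
Proof.
have [a sep] := cone_separation M_add M_scale M_0 M_opp.
exists a => x y Ex Ey.
have := sep _ _ (ex_intro _ 1 (ex_intro _ x (ex_intro _ y (And5 ltr01 Ex Ey erefl erefl)))).
by rewrite scale1r mul1r !dotpBr dotpBl; lra.
Qed.

End NormalSeparation.

Lemma closure_e_dotp_sep {R : realType} {n : nat} {E1 E2 : set 'rV[R]_n} {a b c} :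
  (forall x y, E1 x -> E2 y -> dotp a x + dotp b y <= c) ->
  forall x y, closure_e E1 x -> closure_e E2 y -> dotp a x + dotp b y <= c.
Proof.
move=> sep x y clx cly.
have sep_x y' : E2 y' -> dotp a x + dotp b y' <= c.
  by move=> Ey'; rewrite -lerBrDr; apply: closure_e_dotp_le clx => e Ee; rewrite lerBrDr sep.
by rewrite addrC -lerBrDr; apply: closure_e_dotp_le cly => e Ee; rewrite lerBrDr addrC sep_x.
Qed.

Lemma sup_split {R : realType} {A B : set R} {eps} : A 0 -> B 0 ->
  (forall a b, A a -> B b -> a + b <= eps) ->
  exists e1 e2, [/\ 0 <= e1, 0 <= e2, e1 + e2 = eps, ubound A e1 & ubound B e2].
Proof.
move=> A0 B0 AB; have ubA : ubound A eps by move=> a Aa; rewrite -[a]addr0 AB.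
have supA : has_sup A by split; [exists 0 | exists eps].
exists (sup A), (eps - sup A); split; first exact: sup_upper_bound supA _ A0.
- by rewrite subr_ge0 ge_sup //; exists 0.
- by rewrite subrKC.
- exact: sup_upper_bound.
move=> b Bb; rewrite lerBrDr addrC -lerBrDr ge_sup //; first by exists 0.
by move=> a Aa; rewrite lerBrDr AB.
Qed.

Lemma eps_normal_split {R : realType} {n : nat} {Om1 Om2 : set 'rV[R]_n} {xbar a b eps} :
  Om1 xbar -> Om2 xbar ->
  (forall x y, Om1 x -> Om2 y -> dotp a (x - xbar) + dotp b (y - xbar) <= eps) ->
  exists e1 e2, [/\ 0 <= e1, 0 <= e2, e1 + e2 = eps,
                   eps_normal e1 xbar Om1 a & eps_normal e2 xbar Om2 b].
Proof.
move=> Om1xbar Om2xbar sep.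
pose A := [set dotp a (x - xbar) | x in Om1].
pose B := [set dotp b (y - xbar) | y in Om2].
have [A0 B0] : A 0 /\ B 0 by split; exists xbar; rewrite // subrr dotp0r.
have AB u v : A u -> B v -> u + v <= eps by move=> [x Om1x <-] [y Om2y <-]; exact: sep.
have [e1 [e2 [e1_ge0 e2_ge0 e12 ub1 ub2]]] := sup_split A0 B0 AB.
exists e1, e2; split=> // [x Om1x|y Om2y]; [apply: ub1; exists x | apply: ub2; exists y] => //.
Qed.

Lemma msum_eps_normal {R : realType} {n : nat} (Om1 Om2 : set 'rV[R]_n) xbar e1 e2 :
  msum (eps_normal e1 xbar Om1) (eps_normal e2 xbar Om2) `<=`
  eps_normal (e1 + e2) xbar (Om1 `&` Om2).
Proof.
move=> _ [a [b [Na [Nb ->]]]] x [Om1x Om2x].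
by rewrite dotpDl lerD ?Na ?Nb.
Qed.

Theorem mainTheorem5 (R : realType) (n : nat) (Om1 Om2 : set 'rV[R]_n) (eps : R) :
  nearly_convex Om1 -> nearly_convex Om2 -> 0 <= eps ->
  ri Om1 `&` ri Om2 !=set0 ->
  forall xbar, (Om1 `&` Om2) xbar ->
    eps_normal eps xbar (Om1 `&` Om2) =
    [set xi | exists e1 e2 : R, [/\ 0 <= e1, 0 <= e2, e1 + e2 = eps &
        msum (eps_normal e1 xbar Om1) (eps_normal e2 xbar Om2) xi]].
Proof.
move=> [E1 [cE1 [E1_Om1 Om1_E1]]] [E2 [cE2 [E2_Om2 Om2_E2]]] _ [x0 [ri1 ri2]] xbar [Om1xbar Om2xbar].
apply/seteqP; split=> [xi xi_normal|xi [e1 [e2 [_ _ <-]]]]; last exact: msum_eps_normal.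
have [r1 r1_gt0 core1] := ri_core cE1 E1_Om1 Om1_E1 ri1.
have [r2 r2_gt0 core2] := ri_core cE2 E2_Om2 Om2_E2 ri2.
pose r := Order.min r1 r2.
have r_gt0 : 0 < r by rewrite lt_min r1_gt0 r2_gt0.
have [r_le1 r_le2] : r <= r1 /\ r <= r2 by rewrite !ge_min !lexx orbT.
have [a sepE] := normal_separation cE1 cE2 E1_Om1 E2_Om2 ri1.1 ri2.1 r_gt0
  (subset_trans (rel_ballS r_le1) core1) (subset_trans (rel_ballS r_le2) core2) xi_normal.
have sepOm x y : Om1 x -> Om2 y -> dotp a (x - xbar) + dotp (xi - a) (y - xbar) <= eps.
  move=> Om1x Om2y; have := closure_e_dotp_sep sepE _ _ (Om1_E1 _ Om1x) (Om2_E2 _ Om2y).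
  by rewrite !dotpBr !dotpBl; lra.
have [e1 [e2 [e1_ge0 e2_ge0 e12 N1a N2b]]] := eps_normal_split Om1xbar Om2xbar sepOm.
by exists e1, e2; split=> //; exists a, (xi - a); rewrite subrKC.
Qed.
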